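(* There is an absolute constant $c>0$ such that for all $n\in\mathbb Z^+$, $k\in\{1,\dots,n\}$ and prime powers $q$, the fraction of linear $[n,k]$ codes over $\mathrm{GF}(q)$ (i.e., $k$-dimensional subspaces of $\mathrm{GF}(q)^n$) that are not $2$-MDS is at most $c\cdot 5^n/q$.
   Context: $\mathsf w(\cdot)$ is Hamming weight. A linear $[n,k]$ code is $2$-MDS if there do not exist three distinct vectors $e_0,e_1,e_2\in F^n$ in the same coset of the code with $\mathsf w(e_0)+\mathsf w(e_1)+\mathsf w(e_2)\le 2(n-k)$. *)

From HB Require Import structures.
From mathcomp Require Import all_boot all_order all_algebra all_field.
Set Implicit Arguments. Unset Strict Implicit. Unset Printing Implicit Defensive.
Import Order.TTheory GRing.Theory Num.Theory.
Local Open Scope ring_scope.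

Definition hweight (F : finFieldType) (n : nat) (e : 'rV[F]_n) : nat :=
  #|[set i : 'I_n | e 0 i != 0]|.

Definition is_code (F : finFieldType) (n k : nat) (C : {set 'rV[F]_n}) : bool :=
  [exists G : 'M[F]_(k, n), (\rank G == k) && (C == [set v | (v <= G)%MS])].

Definition codes (F : finFieldType) (n k : nat) : {set {set 'rV[F]_n}} :=
  [set C | is_code k C].

Definition two_MDS (F : finFieldType) (n k : nat) (C : {set 'rV[F]_n}) : bool :=
  ~~ [exists e0 : 'rV[F]_n, exists e1 : 'rV[F]_n, exists e2 : 'rV[F]_n,
        [&& e0 != e1, e0 != e2, e1 != e2,
            (e1 - e0) \in C, (e2 - e0) \in C &
            (hweight e0 + hweight e1 + hweight e2 <= 2 * (n - k))%N]].

Definition non_two_MDS_codes (F : finFieldType) (n k : nat) : {set {set 'rV[F]_n}} :=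
  [set C in codes F n k | ~~ two_MDS k C].

(* If C is not 2-MDS, witnessed by e0, e1, e2 in one coset, then a = e1 - e0
   and b = e2 - e0 are distinct nonzero codewords whose "pair weight"
   sum_i pair_weight (a_i, b_i) is at most wt e0 + wt e1 + wt e2 <= 2(n-k).
   Either b is a multiple of a, and a is a nonzero codeword of weight <= n-k,
   or the 2 x n matrix with rows a, b is row-free of pair weight <= 2(n-k);
   either way C contains q - 1 such "low-weight" matrices (the multiples).

   Summing over low-weight matrices gives
   (#non-2-MDS codes) (q - 1) <= 2 5^n (#codes), whence the theorem, c = 4. *)

From HB Require Import structures.
From mathcomp Require Import all_boot all_order all_algebra all_field.
From mathcomp Require Import zify.
Set Implicit Arguments. Unset Strict Implicit. Unset Printing Implicit Defensive.
Import Order.TTheory GRing.Theory Num.Theory.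
Local Open Scope ring_scope.

Lemma card_set_in_sum (J : finType) (Y : {set J}) (P : pred J) :
  #|[set j in Y | P j]| = (\sum_(j in Y) P j)%N.
Proof.
rewrite -sum1_card big_mkcond [RHS]big_mkcond /=; apply: eq_bigr => j _.
by rewrite !inE; case: (j \in Y); case: (P j).
Qed.

Lemma sum_indicator (J : finType) (P : pred J) :
  (\sum_j (P j : nat))%N = #|[set j | P j]|.
Proof.
rewrite -sum1_card [RHS]big_mkcond; apply: eq_bigr => j _; rewrite inE.
by case: (P j).
Qed.

Lemma double_count (I J : finType) (X : {set I}) (Y : {set J}) (R : I -> J -> bool) :
  (\sum_(i in X) #|[set j in Y | R i j]| = \sum_(j in Y) #|[set i in X | R i j]|)%N.
Proof.
under eq_bigr do rewrite card_set_in_sum.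
under [RHS]eq_bigr do rewrite card_set_in_sum.
exact: exchange_big.
Qed.

(* Exponential-moment bound: if each letter t costs c t <= d and
   sum_t q^(d - c t) <= kappa q^d, then at most kappa^n q^s words of length n
   have total cost at most s. *)
Lemma card_low_cost (T : finType) n (c : T -> nat) (d q kappa s : nat) :
  (0 < q)%N -> (forall t, c t <= d)%N ->
  (\sum_t q ^ (d - c t) <= kappa * q ^ d)%N -> (s <= d * n)%N ->
  (#|[set x : {ffun 'I_n -> T} | \sum_i c (x i) <= s]| <= kappa ^ n * q ^ s)%N.
Proof.
move=> q_gt0 c_le_d sum_le s_le.
set X := [set x | _].
have qpos : (0 < q ^ (d * n - s))%N by rewrite expn_gt0 q_gt0.
rewrite -(leq_pmul2r qpos) -mulnA -expnD subnKC // mulnC expnM -expnMn.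
rewrite mulnC -sum_nat_const.
apply: (@leq_trans (\sum_(x : {ffun 'I_n -> T}) \prod_i q ^ (d - c (x i)))%N).
  rewrite [leqRHS](bigID (mem X)) /=; apply: leq_trans (leq_addr _ _).
  apply: leq_sum => x; rewrite inE => x_low.
  rewrite -expn_sum sumnB; last by move=> i _; exact: c_le_d.
  rewrite sum_nat_const card_ord mulnC leq_pexp2l // leq_sub2l //.
rewrite -(bigA_distr_bigA (fun (i : 'I_n) t => q ^ (d - c t))%N) /=.
rewrite prod_nat_const card_ord.
by case: n {s_le X qpos} => [|n] //; rewrite leq_exp2r // mulnC.
Qed.

Section CodesThroughAMatrix.

Variables (F : finFieldType) (n k : nat).

Definition rows_in m (A : 'M[F]_(m, n)) (C : {set 'rV[F]_n}) : bool :=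
  [forall i, row i A \in C].

Definition codes_through m (A : 'M[F]_(m, n)) : nat :=
  #|[set C in codes F n k | rows_in A C]|.

Definition row_free_mx m p : {set 'M[F]_(m, p)} := [set A | row_free A].

Lemma codesP (C : {set 'rV[F]_n}) :
  is_code k C -> exists2 G : 'M[F]_(k, n), row_free G & C = [set v | (v <= G)%MS].
Proof. by move=> /existsP [G /andP [rG /eqP ->]]; exists G. Qed.

Lemma rows_in_span m (A : 'M[F]_(m, n)) k' (G : 'M[F]_(k', n)) :
  rows_in A [set v | (v <= G)%MS] = (A <= G)%MS.
Proof. by apply/forallP/row_subP => AG i; move: (AG i); rewrite inE. Qed.

Lemma codes_through_eqmx m1 m2 (A : 'M[F]_(m1, n)) (B : 'M[F]_(m2, n)) :
  (A :=: B)%MS -> codes_through A = codes_through B.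
Proof.
move=> eqAB; apply: eq_card => C; rewrite !inE; apply: andb_id2l => /codesP [G _ ->].
by rewrite !rows_in_span eqAB.
Qed.

Lemma submx_mulmx_unit m (A : 'M[F]_(m, n)) k' (G : 'M[F]_(k', n)) (U : 'M[F]_n) :
  U \in unitmx -> (A <= G *m U)%MS = (A *m invmx U <= G)%MS.
Proof.
by move=> uU; rewrite -(submxMfree _ G (etrans (row_free_unit U) uU)) mulmxKV.
Qed.

(* Right multiplication by an invertible matrix maps codes to codes, so it
   cannot increase the number of codes through A. *)
Lemma codes_through_mulmx_le m (A : 'M[F]_(m, n)) (U : 'M[F]_n) :
  U \in unitmx -> (codes_through (A *m U) <= codes_through A)%N.
Proof.
move=> uU; have uV : invmx U \in unitmx by rewrite unitmx_inv.
pose g (C : {set 'rV[F]_n}) := [set v *m invmx U | v in C].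
have g_inj : injective g.
  have mulV_inj : injective (fun v : 'rV[F]_n => v *m invmx U).
    by apply: row_free_inj; rewrite row_free_unit.
  move=> C1 C2 eq_g; apply/setP => v.
  have := congr1 (fun S : {set 'rV[F]_n} => v *m invmx U \in S) eq_g.
  by rewrite /g !(mem_imset _ _ mulV_inj).
rewrite /codes_through -(card_imset _ g_inj); apply: subset_leq_card.
apply/subsetP => D /imsetP [C]; rewrite !inE => /andP [/codesP [G rG ->] AUG] ->.
have gC : g [set v | (v <= G)%MS] = [set v | (v <= G *m invmx U)%MS].
  apply/setP => w; rewrite inE submx_mulmx_unit // invmxK.
  apply/imsetP/idP => [[v] | wUG]; first by rewrite inE => vG ->; rewrite mulmxKV.
  by exists (w *m U); rewrite ?inE ?mulmxK.
rewrite gC rows_in_span submx_mulmx_unit // invmxK -rows_in_span AUG andbT.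
apply/existsP; exists (G *m invmx U); rewrite eqxx andbT.
by rewrite mxrankMfree ?row_free_unit.
Qed.

Lemma codes_through_mulmx m (A : 'M[F]_(m, n)) (U : 'M[F]_n) :
  U \in unitmx -> codes_through (A *m U) = codes_through A.
Proof.
move=> uU; apply/eqP; rewrite eqn_leq codes_through_mulmx_le //=.
have := @codes_through_mulmx_le m (A *m U) (invmx U).
by rewrite mulmxK // unitmx_inv; apply.
Qed.

(* GL_n acts transitively on row-free m x n matrices up to row space, so all
   of them lie in the same number of codes. *)
Lemma codes_through_row_free m (A : 'M[F]_(m, n)) :
  row_free A -> codes_through A = codes_through (pid_mx m : 'M[F]_(m, n)).
Proof.
move=> /eqP rkA.
rewrite -(codes_through_mulmx (pid_mx m) (row_ebase_unit A)); apply: codes_through_eqmx.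
rewrite -{1}(mulmx_ebase A) rkA -mulmxA.
by apply: eqmxMfull; rewrite row_full_unit col_ebase_unit.
Qed.

(* A code with row-free generator G contains exactly the row-free matrices
   D *m G with D row-free. *)
Lemma card_row_free_in_code m (C : {set 'rV[F]_n}) :
  C \in codes F n k -> #|[set A in row_free_mx m n | rows_in A C]| = #|row_free_mx m k|.
Proof.
rewrite inE => /codesP [G rG ->].
have -> : [set A in row_free_mx m n | rows_in A [set v | (v <= G)%MS]]
          = (mulmx^~ G) @: row_free_mx m k.
  apply/setP => A; rewrite !inE rows_in_span; apply/andP/imsetP.
    move=> [rA /submxP [D eD]]; exists D => //.
    by rewrite inE /row_free -(mxrankMfree _ rG) -eD.
  move=> [D]; rewrite inE => rD ->; split; last exact: submxMl.
  by rewrite /row_free mxrankMfree.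
by rewrite card_imset //; apply: row_free_inj.
Qed.

(* Appending l arbitrary columns to a row-free matrix keeps it row-free. *)
Lemma card_row_free_widen m p l :
  (#|row_free_mx m p| * #|F| ^ (m * l) <= #|row_free_mx m (p + l)|)%N.
Proof.
rewrite -card_mx -cardsT -cardsX.
pose join (XY : 'M[F]_(m, p) * 'M[F]_(m, l)) := row_mx XY.1 XY.2.
have join_inj : injective join.
  by move=> [X1 Y1] [X2 Y2]; rewrite /join /= => /eq_row_mx [-> ->].
rewrite -(card_imset _ join_inj); apply: subset_leq_card.
apply/subsetP => A /imsetP [[X Y]]; rewrite !inE /= => /andP [rX _] ->.
rewrite /row_free eqn_leq rank_leq_row /=.
have eX : row_mx X Y *m col_mx 1%:M 0 = X by rewrite mul_row_col mulmx1 mulmx0 addr0.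
by move/eqP: rX => {1}<-; rewrite -{1}eX mxrankM_maxl.
Qed.

(* Double counting pairs (row-free A, code C through A): a row-free m x n
   matrix lies in at most a fraction q^(-m(n-k)) of the [n,k] codes. *)
Lemma codes_through_bound m (A : 'M[F]_(m, n)) :
  (k <= n)%N -> row_free A -> (codes_through A * #|F| ^ (m * (n - k)) <= #|codes F n k|)%N.
Proof.
move=> kn rA.
have count_pairs :
    (#|row_free_mx m n| * codes_through A = #|codes F n k| * #|row_free_mx m k|)%N.
  have sum_const : (\sum_(B in row_free_mx m n) codes_through B
                    = #|row_free_mx m n| * codes_through A)%N.
    rewrite -sum_nat_const; apply: eq_bigr => B; rewrite inE => rB.
    by rewrite (codes_through_row_free rB) (codes_through_row_free rA).
  rewrite -sum_const /codes_through double_count -sum_nat_const.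
  by apply: eq_bigr => C Cc; rewrite card_row_free_in_code.
have rf_pos : (0 < #|row_free_mx m n|)%N by apply/card_gt0P; exists A; rewrite inE.
rewrite -(leq_pmul2l rf_pos) mulnA count_pairs -mulnA [leqRHS]mulnC leq_mul2l.
by have := card_row_free_widen m k (n - k); rewrite subnKC // => ->; rewrite orbT.
Qed.

Lemma sum_codes_through_bound m (S : {set 'M[F]_(m, n)}) K :
  (k <= n)%N -> {subset S <= row_free_mx m n} ->
  (#|S| <= K * #|F| ^ (m * (n - k)))%N ->
  (\sum_(A in S) codes_through A <= K * #|codes F n k|)%N.
Proof.
move=> kn S_rf cardS.
have q_pos : (0 < #|F| ^ (m * (n - k)))%N.
  by rewrite expn_gt0; apply/orP; left; apply/card_gt0P; exists 0.
rewrite -(leq_pmul2r q_pos) big_distrl /=.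
apply: (@leq_trans (\sum_(A in S) #|codes F n k|)%N).
  by apply: leq_sum => A /S_rf; rewrite inE; apply: codes_through_bound.
by rewrite sum_nat_const mulnAC leq_mul2r cardS orbT.
Qed.

End CodesThroughAMatrix.

Section PairWeight.

Variable F : finFieldType.

(* This is the least
   total Hamming weight of x, y, z with y - x = u and z - x = v. *)
Definition pair_weight (u v : F) : nat :=
  (((u != 0%R) || (v != 0%R)) + [&& u != 0%R, v != 0%R & u != v])%N.

Lemma pair_weight_le2 (u v : F) : (pair_weight u v <= 2)%N.
Proof. by rewrite /pair_weight; case: (_ || _); case: [&& _, _ & _]. Qed.

Lemma pair_weight_coset (x y z : F) :
  (pair_weight (y - x)%R (z - x)%R <= (x != 0%R) + (y != 0%R) + (z != 0%R))%N.
Proof.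
rewrite /pair_weight.
have [->|x0] := eqVneq x 0.
  by rewrite !subr0 /=; case: (y != 0); case: (z != 0) => //=; case: (y != z).
have [->|y0] := eqVneq y 0; have [->|z0] := eqVneq z 0 => //=;
  last exact: leq_trans (pair_weight_le2 _ _) _.
- by rewrite eqxx !andbF addn0; case: (_ || _).
- exact: pair_weight_le2.
- exact: pair_weight_le2.
Qed.

Lemma pair_weight_multiple (u l : F) :
  l != 0 -> l != 1 -> pair_weight u (l * u) = (2 * (u != 0%R))%N.
Proof.
move=> l0 l1; rewrite /pair_weight.
have [->|u0] := eqVneq u 0; first by rewrite mulr0 eqxx.
rewrite mulf_eq0 (negPf l0) (negPf u0) /=.
suff -> : u != l * u by [].
by apply: contra_neq l1 => e; apply: (mulIf u0); rewrite mul1r -e.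
Qed.

Lemma pair_weight_scale (u v l : F) :
  l != 0 -> pair_weight (l * u) (l * v) = pair_weight u v.
Proof.
by move=> l0; rewrite /pair_weight !mulf_eq0 (negPf l0) /= (inj_eq (mulfI l0)).
Qed.

(* Each term is bounded by
   indicators of the lines u = 0, v = 0, u = v and of the origin. *)
Lemma sum_pow_pair_weight :
  (\sum_(t : F * F) #|F| ^ (2 - pair_weight t.1 t.2) <= 5 * #|F| ^ 2)%N.
Proof.
set q := #|F|.
apply: (@leq_trans (\sum_(t : F * F) (q ^ 2 * (t == (0%R, 0%R)) + q * (t.1 == 0%R)
    + q * (t.2 == 0%R) + q * (t.1 == t.2) + 1))%N).
  apply: leq_sum => [[u v]] _ /=; rewrite /pair_weight /=.
  have [->|u0] := eqVneq u 0; have [->|v0] := eqVneq v 0 => /=.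
  - by rewrite subn0 eqxx; lia.
  - by rewrite (_ : 2 - (1 + 0) = 1)%N // expn1; lia.
  - by rewrite (_ : 2 - (1 + 0) = 1)%N // expn1; lia.
  - have [->|uv] := eqVneq u v; first by rewrite /= (_ : 2 - (1 + 0) = 1)%N // expn1; lia.
    by rewrite (_ : 2 - (1 + 1) = 0)%N // expn0; lia.
rewrite !big_split /= -!big_distrr /= !sum_indicator sum1_card card_prod.
have -> : #|[set t : F * F | t == (0, 0)]| = 1%N.
  by rewrite -[RHS](cards1 (0 : F, 0 : F)); apply: eq_card => t; rewrite !inE.
have -> : #|[set t : F * F | t.1 == 0]| = q.
  rewrite (_ : [set t : F * F | t.1 == 0%R] = setX [set 0%R] setT).
    by rewrite cardsX cards1 cardsT mul1n.
  by apply/setP => -[u v]; rewrite !inE andbT.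
have -> : #|[set t : F * F | t.2 == 0]| = q.
  rewrite (_ : [set t : F * F | t.2 == 0%R] = setX setT [set 0%R]).
    by rewrite cardsX cards1 cardsT muln1.
  by apply/setP => -[u v]; rewrite !inE.
have -> : #|[set t : F * F | t.1 == t.2]| = q.
  rewrite (_ : [set t : F * F | t.1 == t.2] = (fun u : F => (u, u)) @: setT).
    by rewrite card_imset ?cardsT // => u w [].
  apply/setP => -[u v]; rewrite !inE /=.
  by apply/eqP/imsetP => [->|[w _ [-> ->]]] //; exists v.
rewrite -/q; lia.
Qed.

Lemma sum_pow_weight : (\sum_(u : F) #|F| ^ (1 - (u != 0%R)) <= 5 * #|F|)%N.
Proof.
set q := #|F|.
apply: (@leq_trans (\sum_(u : F) (q * (u == 0%R) + 1))%N).
  by apply: leq_sum => u _; case: eqP => /=; rewrite ?subn0 ?subnn ?expn1; lia.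
rewrite big_split /= -big_distrr /= sum_indicator sum1_card.
have -> : #|[set u : F | u == 0]| = 1%N.
  by rewrite -[RHS](cards1 (0 : F)); apply: eq_card => u; rewrite !inE.
rewrite -/q; lia.
Qed.

End PairWeight.

Section LowWeightMatrices.

Variables (F : finFieldType) (n : nat).

Lemma hweight_sum (a : 'rV[F]_n) : hweight a = (\sum_i (a 0%R i != 0%R))%N.
Proof. by rewrite /hweight sum_indicator. Qed.

Definition pair_weight_mx (A : 'M[F]_(2, n)) : nat :=
  (\sum_i pair_weight (A ord0 i) (A ord_max i))%N.

(* Rank-2 (resp. rank-1) matrices that can witness a failure of 2-MDS-ness
   for redundancy r = n - k. *)
Definition low_planes (r : nat) : {set 'M[F]_(2, n)} :=
  [set A | row_free A && (pair_weight_mx A <= 2 * r)%N].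

Definition low_vectors (r : nat) : {set 'rV[F]_n} :=
  [set a | row_free a && (hweight a <= r)%N].

Lemma low_planes_row_free r : {subset low_planes r <= row_free_mx F 2 n}.
Proof. by move=> A; rewrite !inE => /andP []. Qed.

Lemma low_vectors_row_free r : {subset low_vectors r <= row_free_mx F 1 n}.
Proof. by move=> a; rewrite !inE => /andP []. Qed.

(* The columns of a low-weight plane form a word of total pair weight at most
   2r, so card_low_cost with d = 2 and kappa = 5 applies. *)
Lemma card_low_planes r : (r <= n)%N -> (#|low_planes r| <= 5 ^ n * #|F| ^ (2 * r))%N.
Proof.
move=> rn.
pose cols (A : 'M[F]_(2, n)) := [ffun i => (A ord0 i, A ord_max i)].
have cols_inj : injective cols.
  move=> A B eqAB; apply/matrixP => i j.
  have := congr1 (fun x : {ffun 'I_n -> F * F} => x j) eqAB; rewrite !ffunE => -[e0 e1].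
  case: i => -[|[|//]] Hi.
    by rewrite (_ : Ordinal Hi = ord0) ?e0 //; apply: val_inj.
  by rewrite (_ : Ordinal Hi = ord_max) ?e1 //; apply: val_inj.
have q_gt0 : (0 < #|F|)%N by apply/card_gt0P; exists 0.
have r2n : (2 * r <= 2 * n)%N by rewrite leq_mul2l rn orbT.
apply: leq_trans (card_low_cost q_gt0 (fun t => pair_weight_le2 t.1 t.2)
                    (sum_pow_pair_weight F) r2n).
rewrite -(card_imset _ cols_inj); apply: subset_leq_card.
apply/subsetP => x /imsetP [A]; rewrite !inE => /andP [_ lowA] ->.
by under eq_bigr do rewrite ffunE.
Qed.

(* Likewise with d = 1, counting entries by their Hamming weight. *)
Lemma card_low_vectors r : (r <= n)%N -> (#|low_vectors r| <= 5 ^ n * #|F| ^ r)%N.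
Proof.
move=> rn.
pose entries (a : 'rV[F]_n) := [ffun i => a 0 i].
have entries_inj : injective entries.
  move=> a b eqab; apply/rowP => j.
  by have := congr1 (fun x : {ffun 'I_n -> F} => x j) eqab; rewrite !ffunE.
have q_gt0 : (0 < #|F|)%N by apply/card_gt0P; exists 0.
have weight_le1 (u : F) : (u != 0%R <= 1)%N by case: (_ != _).
apply: leq_trans (card_low_cost q_gt0 weight_le1 (sum_pow_weight F) _); last first.
  by rewrite mul1n.
rewrite -(card_imset _ entries_inj); apply: subset_leq_card.
apply/subsetP => x /imsetP [a]; rewrite !inE hweight_sum => /andP [_ lowa] ->.
by under eq_bigr do rewrite ffunE.
Qed.

Lemma low_planes_scale r l (A : 'M[F]_(2, n)) :
  l != 0 -> A \in low_planes r -> l *: A \in low_planes r.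
Proof.
move=> l0; rewrite !inE /row_free mxrank_scale_nz // => /andP [-> lowA] /=.
by apply: leq_trans lowA; apply: eq_leq; apply: eq_bigr => i _; rewrite !mxE pair_weight_scale.
Qed.

Lemma low_vectors_scale r l (a : 'rV[F]_n) :
  l != 0 -> a \in low_vectors r -> l *: a \in low_vectors r.
Proof.
move=> l0; rewrite !inE /row_free mxrank_scale_nz // => /andP [-> lowa] /=.
apply: leq_trans lowa; apply: eq_leq; rewrite !hweight_sum; apply: eq_bigr => i _.
by rewrite !mxE mulf_eq0 (negPf l0).
Qed.

End LowWeightMatrices.

Section NonTwoMDSCodes.

Variables (F : finFieldType) (n k : nat).

Definition rows2 (a b : 'rV[F]_n) : 'M[F]_(2, n) :=
  \matrix_(i < 2, j < n) (if i == ord0 then a 0 j else b 0 j).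

Lemma row_rows2 (a b : 'rV[F]_n) (i : 'I_2) :
  row i (rows2 a b) = if i == ord0 then a else b.
Proof. by apply/rowP => j; rewrite !mxE; case: (i == ord0). Qed.

Lemma row_free_rows2 (a b : 'rV[F]_n) :
  a != 0 -> ~~ (b <= a)%MS -> row_free (rows2 a b).
Proof.
move=> a0 nba; rewrite /row_free eqn_leq rank_leq_row /=.
have ab_sub : ((a + b)%MS <= rows2 a b)%MS.
  rewrite addsmx_sub; apply/andP; split.
    by have := row_sub ord0 (rows2 a b); rewrite row_rows2 eqxx.
  by have := row_sub ord_max (rows2 a b); rewrite row_rows2.
apply: leq_trans (mxrankS ab_sub).
have := ltn_leqif (mxrank_leqif_sup (addsmxSl a b)); rewrite rank_rV a0 => ->.
by apply: contra nba => /(submx_trans (addsmxSr a b)).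
Qed.

(* A code that is not 2-MDS contains a low-weight plane or a low-weight vector:
   the differences a = e1 - e0, b = e2 - e0 have pair weight <= 2(n-k); if
   b = l a then l <> 0, 1 and a alone has weight <= n-k. *)
Lemma non_two_MDS_witness (C : {set 'rV[F]_n}) :
  C \in codes F n k -> ~~ two_MDS k C ->
  (exists2 A, A \in low_planes F n (n - k) & rows_in A C)
  \/ (exists2 a, a \in low_vectors F n (n - k) & rows_in a C).
Proof.
rewrite inE => /codesP [G rG ->].
rewrite negbK => /existsP [e0 /existsP [e1 /existsP [e2]]].
case/and5P => n01 n02 n12 aC /andP [bC wt].
set a := e1 - e0 in aC; set b := e2 - e0 in bC.
move: aC bC; rewrite !inE => aG bG.
have a0 : a != 0 by rewrite subr_eq0 eq_sym.
have b0 : b != 0 by rewrite subr_eq0 eq_sym.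
have ab : a != b by apply: contra_neq n12 => /(congr1 (+%R^~ e0)); rewrite !subrK.
have pair_wt : (\sum_i pair_weight (a 0%R i) (b 0%R i) <= 2 * (n - k))%N.
  apply: leq_trans wt; rewrite !hweight_sum -!big_split /=.
  by apply: leq_sum => i _; rewrite !mxE pair_weight_coset.
have [/sub_rVP [l bl] | nba] := boolP (b <= a)%MS.
  right; exists a; last by rewrite rows_in_span.
  have l0 : l != 0 by apply: contra_neq b0 => l0; rewrite bl l0 scale0r.
  have l1 : l != 1 by apply: contra_neq ab => l1; rewrite bl l1 scale1r.
  rewrite inE /row_free rank_rV a0 /= -(leq_pmul2l (isT : 0 < 2)%N).
  apply: leq_trans pair_wt; rewrite hweight_sum big_distrr /=.
  by apply: eq_leq; apply: eq_bigr => i _; rewrite bl [X in pair_weight _ X]mxE pair_weight_multiple.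
left; exists (rows2 a b).
  rewrite inE row_free_rows2 //=; apply: leq_trans pair_wt.
  by apply: eq_leq; apply: eq_bigr => i _; rewrite !mxE.
by rewrite rows_in_span; apply/row_subP => i; rewrite row_rows2; case: (i == ord0).
Qed.

(* A code through a nonzero member A of a scaling-closed family S contains
   the q - 1 distinct members l A, l <> 0, of S. *)
Lemma card_scaled_rows_in m (S : {set 'M[F]_(m, n)}) (C : {set 'rV[F]_n}) (A : 'M[F]_(m, n)) :
  (forall l B, l != 0 -> B \in S -> l *: B \in S) -> C \in codes F n k ->
  A \in S -> A != 0 -> rows_in A C -> (#|F| - 1 <= #|[set B in S | rows_in B C]|)%N.
Proof.
move=> S_scale; rewrite inE => /codesP [G _ ->] AS A0 AC.
have scale_inj : injective (fun l : F => l *: A).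
  move=> l l' /eqP; rewrite -subr_eq0 -scalerBl scaler_eq0 (negPf A0) orbF subr_eq0.
  by move/eqP.
rewrite subn1 -(cardsC1 (0 : F)) -(card_imset _ scale_inj).
apply: subset_leq_card; apply/subsetP => B /imsetP [l]; rewrite !inE => l0 ->.
rewrite S_scale //=; move: AC; rewrite !rows_in_span; exact: scalemx_sub.
Qed.

Lemma row_free_neq0 m (A : 'M[F]_(m.+1, n)) : row_free A -> A != 0.
Proof. by apply: contraTneq => ->; rewrite /row_free mxrank0. Qed.

(* Each non-2-MDS code contains q - 1 low-weight planes or vectors; summing the
   bounds on low-weight matrices and on the codes through each of them gives
   (#non-2-MDS codes)(q - 1) <= 2 5^n #codes. *)
Lemma card_non_two_MDS : (k <= n)%N ->
  (#|non_two_MDS_codes F n k| * (#|F| - 1) <= 2 * 5 ^ n * #|codes F n k|)%N.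
Proof.
move=> kn; set r := (n - k)%N.
have rn : (r <= n)%N by rewrite leq_subr.
pose through (C : {set 'rV[F]_n}) :=
  (#|[set A in low_planes F n r | rows_in A C]| + #|[set a in low_vectors F n r | rows_in a C]|)%N.
have bad_through C : C \in non_two_MDS_codes F n k -> (#|F| - 1 <= through C)%N.
  rewrite inE => /andP [Cc nC].
  have [[A AS AC] | [a aS aC]] := non_two_MDS_witness Cc nC.
    apply: leq_trans (leq_addr _ _); apply: card_scaled_rows_in AC => //.
      exact: low_planes_scale.
    by apply: row_free_neq0; move/low_planes_row_free: AS; rewrite inE.
  apply: leq_trans (leq_addl _ _); apply: card_scaled_rows_in aC => //.
    exact: low_vectors_scale.
  by apply: row_free_neq0; move/low_vectors_row_free: aS; rewrite inE.
rewrite -sum_nat_const.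
apply: (@leq_trans (\sum_(C in non_two_MDS_codes F n k) through C)%N).
  exact: leq_sum.
apply: (@leq_trans (\sum_(C in codes F n k) through C)%N).
  rewrite [leqRHS](big_setID (non_two_MDS_codes F n k)) /= (setIidPr _) ?leq_addr //.
  by apply/subsetP => C; rewrite inE => /andP [].
rewrite big_split -!(double_count _ (codes F n k) (fun A C => rows_in A C)) /=.
rewrite mul2n -addnn mulnDl; apply: leq_add.
  apply: sum_codes_through_bound kn (@low_planes_row_free _ _ _) _.
  exact: card_low_planes.
apply: sum_codes_through_bound kn (@low_vectors_row_free _ _ _) _.
by rewrite mul1n; exact: card_low_vectors.
Qed.

End NonTwoMDSCodes.

(* With c = 4: divide card_non_two_MDS by q #codes, using q <= 2 (q - 1). *)
Theorem mainTheorem17 :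
  exists c : rat, 0 < c /\
    forall (F : finFieldType) (n k : nat),
      (0 < n)%N -> (1 <= k <= n)%N ->
      (#|non_two_MDS_codes F n k|%:R / #|codes F n k|%:R : rat)
        <= c * 5%:R ^+ n / #|F|%:R.
Proof.
exists 4; split => // F n k _ /andP [_ kn].
have q_gt1 : (1 < #|F|)%N by apply/card_gt1P; exists 0, 1; rewrite eq_sym oner_neq0.
have bad_le := card_non_two_MDS F kn.
set B := #|non_two_MDS_codes F n k| in bad_le *.
set N := #|codes F n k| in bad_le *.
set q := #|F| in q_gt1 bad_le *.
have [-> | N_gt0] := posnP N; first by rewrite invr0 mulr0 divr_ge0 // mulr_ge0 // exprn_ge0.
rewrite ler_pdivrMr ?ltr0n // mulrAC ler_pdivlMr ?ltr0n 1?ltnW //.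
rewrite -natrX -!natrM ler_nat.
nia.
Qed.
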